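(* Let $d\ge1$, let $S\subset\mathbb R^d$ be a regular simplex of unit side length, let $k,z\ge1$ be integers and set $s=zkd$. Let $A_s$ be the collection of $(d+1)^s$ simplices in the $s$-stage uniform subdivision of $S$. Then at most a $z(1-e^{-d})^k$ fraction of the simplices in $A_s$ have diameter larger than $(d/(d+1))^z$.
   Context: The $i$-stage uniform subdivision of a simplex $S'$ is defined recursively: the $0$-stage subdivision is $\{S'\}$; the $(i+1)$-stage subdivision is obtained from the $i$-stage subdivision by replacing each simplex $T$ in it, with vertices $v_0,\dots,v_d$ and barycenter $b=(v_0+\dots+v_d)/(d+1)$, by the $d+1$ simplices obtained from $T$ by replacing one vertex $v_m$ with $b$ ($m=0,\dots,d$). Thus the $i$-stage subdivision consists of $(d+1)^i$ simplices. The diameter of a simplex is the largest distance between two of its vertices. *)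

From Stdlib Require Import Reals List Arith.
Import ListNotations.
Open Scope R_scope.

(* A point of R^d is represented as a function nat -> R; only the
   coordinates 0..d-1 are used (all geometric notions below only read them). *)
Definition point := nat -> R.

Definition dist (d : nat) (x y : point) : R :=
  sqrt (fold_right Rplus 0 (map (fun c => (x c - y c) ^ 2) (seq 0 d))).

(* A d-simplex: vertex index m (0 <= m <= d) |-> vertex v_m. *)
Definition simplex := nat -> point.

Definition barycenter (d : nat) (T : simplex) : point :=
  fun c => fold_right Rplus 0 (map (fun m => T m c) (seq 0 (S d))) / INR (S d).

Definition replace_vertex (T : simplex) (m : nat) (b : point) : simplex :=
  fun j => if Nat.eqb j m then b else T j.

Definition children (d : nat) (T : simplex) : list simplex :=
  map (fun m => replace_vertex T m (barycenter d T)) (seq 0 (S d)).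

(* i-stage uniform subdivision, as a list (multiset) of (d+1)^i simplices. *)
Fixpoint subdiv (d : nat) (i : nat) (S0 : simplex) : list simplex :=
  match i with
  | O => [S0]
  | Datatypes.S i' => flat_map (children d) (subdiv d i' S0)
  end.

Definition diameter (d : nat) (T : simplex) : R :=
  fold_right Rmax 0
    (map (fun p => dist d (T (fst p)) (T (snd p)))
         (list_prod (seq 0 (S d)) (seq 0 (S d)))).

Definition regular_unit (d : nat) (T : simplex) : Prop :=
  forall i j, (i <= d)%nat -> (j <= d)%nat -> i <> j -> dist d (T i) (T j) = 1.

Definition diam_gt (d : nat) (r : R) (T : simplex) : bool :=
  if Rlt_dec r (diameter d T) then true else false.

(* If every edge of a simplex has length at most D, the barycentre lies within
   (d/(d+1)) D of each vertex.  After d further subdivision steps that each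
   replace a different vertex, at most one original vertex survives, so the
   simplex has shrunk to diameter at most (d/(d+1)) D.  At least (d+1)! of the
   (d+1)^d descendants arise this way, and (d+1)^d <= e^d d!, so at most a
   fraction 1 - e^{-d} of them fail to shrink.  Iterating over k blocks of d
   steps, a simplex fails to shrink during kd steps with frequency at most
   (1 - e^{-d})^k; a union bound over z consecutive blocks of kd steps, each of
   which has to shrink the diameter once more, gives the factor z. *)

From Pilot Require Import Defs.
From Stdlib Require Import Reals List Arith Lra Lia.
Import ListNotations.
Open Scope R_scope.
Open Scope bool_scope.

Definition sumR {A} (f : A -> R) (l : list A) : R := fold_right Rplus 0 (map f l).

Lemma sumR_cons {A} (f : A -> R) a l : sumR f (a :: l) = f a + sumR f l.
Proof. reflexivity. Qed.

Lemma sumR_ext {A} (f g : A -> R) l : (forall x, f x = g x) -> sumR f l = sumR g l.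
Proof. intros H; unfold sumR; rewrite (map_ext f g H); reflexivity. Qed.

Lemma sumR_map {A B} (f : B -> R) (g : A -> B) l : sumR f (map g l) = sumR (fun x => f (g x)) l.
Proof. unfold sumR; rewrite map_map; reflexivity. Qed.

Lemma sumR_sub_const {A} (f : A -> R) a l :
  sumR (fun x => f x - a) l = sumR f l - a * INR (length l).
Proof.
  induction l as [|x l IH]; [unfold sumR; simpl; ring|].
  rewrite !sumR_cons, IH; cbn [length]; rewrite S_INR; ring.
Qed.

Lemma sumR_le_two_valued {A} (p : A -> bool) (f : A -> R) a b l :
  (forall x, In x l -> f x <= if p x then a else b) ->
  sumR f l <= b * INR (length l) + (a - b) * INR (length (filter p l)).
Proof.
  induction l as [|x l IH]; intros H; [unfold sumR; simpl; lra|].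
  rewrite sumR_cons. pose proof (H x (or_introl eq_refl)) as Hx.
  assert (Hl := IH (fun y Hy => H y (or_intror Hy))).
  cbn [length filter]; destruct (p x); cbn [length]; rewrite ?S_INR; lra.
Qed.

Lemma length_filter_flat_map {A B} (p : B -> bool) (f : A -> list B) l :
  INR (length (filter p (flat_map f l))) = sumR (fun x => INR (length (filter p (f x)))) l.
Proof.
  induction l as [|x l IH]; [reflexivity|].
  simpl; rewrite filter_app, length_app, plus_INR, IH; reflexivity.
Qed.

Lemma flat_map_flat_map {A B C} (f : A -> list B) (g : B -> list C) l :
  flat_map g (flat_map f l) = flat_map (fun x => flat_map g (f x)) l.
Proof. induction l as [|x l IH]; [reflexivity|]. simpl. now rewrite flat_map_app, IH. Qed.

Lemma length_filter_remove (p : nat -> bool) m l :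
  NoDup l -> In m l -> p m = true ->
  length (filter p l) = S (length (filter (fun x => p x && negb (Nat.eqb x m)) l)).
Proof.
  induction l as [|a l IH]; intros Hnd Hm Hp; [destruct Hm|].
  inversion Hnd as [|? ? Ha Hl]; subst. simpl.
  destruct (Nat.eqb_spec a m) as [<-|Ham].
  - rewrite Hp, Bool.andb_false_r; cbn [length]. f_equal. apply f_equal, filter_ext_in.
    intros x Hx. destruct (Nat.eqb_spec x a) as [->|]; [contradiction|].
    now rewrite Bool.andb_true_r.
  - destruct Hm as [->|Hm]; [contradiction|].
    rewrite Bool.andb_true_r. destruct (p a); simpl; rewrite (IH Hl Hm Hp); reflexivity.
Qed.

Lemma sumR_sqr_nonneg {A} (f : A -> R) l : 0 <= sumR (fun x => f x ^ 2) l.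
Proof.
  induction l as [|a l IH]; [unfold sumR; simpl; lra|].
  rewrite sumR_cons. pose proof (pow2_ge_0 (f a)). lra.
Qed.

Lemma sumR_sqr_lincomb {A} (u v : A -> R) l x y :
  sumR (fun c => (x * v c - y * u c) ^ 2) l
  = x ^ 2 * sumR (fun c => v c ^ 2) l - 2 * x * y * sumR (fun c => u c * v c) l
    + y ^ 2 * sumR (fun c => u c ^ 2) l.
Proof. induction l as [|a l IH]; [unfold sumR; simpl; ring|]. rewrite !sumR_cons, IH. ring. Qed.

Lemma cauchy_schwarz {A} (u v : A -> R) l :
  (sumR (fun c => u c * v c) l) ^ 2 <= sumR (fun c => u c ^ 2) l * sumR (fun c => v c ^ 2) l.
Proof.
  induction l as [|a l IH]; [unfold sumR; simpl; lra|].
  rewrite !sumR_cons.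
  pose proof (sumR_sqr_lincomb u v l (u a) (v a)) as Hcomb.
  pose proof (sumR_sqr_nonneg (fun c => u a * v c - v a * u c) l).
  nra.
Qed.

Section EuclideanNorm.
Variable d : nat.

Definition sqnorm (v : point) : R := sumR (fun c => v c ^ 2) (seq 0 d).
Definition enorm (v : point) : R := sqrt (sqnorm v).

Lemma enorm_ext u v : (forall c, u c = v c) -> enorm u = enorm v.
Proof. intros H; unfold enorm, sqnorm; f_equal; apply sumR_ext; intros; now rewrite H. Qed.

Lemma enorm_zero : enorm (fun _ => 0) = 0.
Proof.
  unfold enorm, sqnorm. transitivity (sqrt 0); [f_equal|apply sqrt_0].
  induction (seq 0 d) as [|a l IH]; [reflexivity|]. rewrite sumR_cons, IH. ring.
Qed.

Lemma enorm_scale a v : enorm (fun c => a * v c) = Rabs a * enorm v.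
Proof.
  unfold enorm. replace (sqnorm (fun c => a * v c)) with (Rsqr a * sqnorm v).
  - now rewrite sqrt_mult_alt, sqrt_Rsqr_abs by apply Rle_0_sqr.
  - unfold sqnorm, Rsqr. induction (seq 0 d) as [|x l IH]; [unfold sumR; simpl; ring|].
    rewrite !sumR_cons, <- IH. ring.
Qed.

Lemma enorm_add_le u v : enorm (fun c => u c + v c) <= enorm u + enorm v.
Proof.
  unfold enorm.
  set (a := sqnorm u); set (b := sqnorm v); set (s := sumR (fun c => u c * v c) (seq 0 d)).
  assert (Ha : 0 <= a) by apply sumR_sqr_nonneg.
  assert (Hb : 0 <= b) by apply sumR_sqr_nonneg.
  assert (Hexpand : sqnorm (fun c => u c + v c) = a + 2 * s + b).
  { unfold a, b, s, sqnorm. induction (seq 0 d) as [|x l IH]; [unfold sumR; simpl; ring|].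
    rewrite !sumR_cons, IH. ring. }
  assert (Hs : s <= sqrt a * sqrt b).
  { rewrite <- sqrt_mult_alt by exact Ha.
    destruct (Rle_dec s 0); [pose proof (sqrt_pos (a * b)); lra|].
    rewrite <- (sqrt_pow2 s) by lra. apply sqrt_le_1_alt, cauchy_schwarz. }
  pose proof (sqrt_pos a); pose proof (sqrt_pos b).
  rewrite Hexpand, <- (sqrt_pow2 (sqrt a + sqrt b)) by lra.
  apply sqrt_le_1_alt.
  replace ((sqrt a + sqrt b) ^ 2) with (sqrt a * sqrt a + 2 * (sqrt a * sqrt b) + sqrt b * sqrt b)
    by ring.
  rewrite !sqrt_sqrt by assumption. lra.
Qed.

Lemma enorm_sum_le {A} (F : A -> point) l :
  enorm (fun c => sumR (fun m => F m c) l) <= sumR (fun m => enorm (F m)) l.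
Proof.
  induction l as [|a l IH]; [unfold sumR; simpl; rewrite enorm_zero; lra|].
  rewrite sumR_cons, (enorm_ext _ (fun c => F a c + sumR (fun m => F m c) l))
    by reflexivity.
  eapply Rle_trans; [apply enorm_add_le|]. lra.
Qed.

Lemma dist_enorm x y : Defs.dist d x y = enorm (fun c => x c - y c).
Proof. reflexivity. Qed.

Lemma dist_self x : Defs.dist d x x = 0.
Proof. rewrite dist_enorm, (enorm_ext _ (fun _ => 0)) by (intros; ring). apply enorm_zero. Qed.

Lemma dist_comm x y : Defs.dist d x y = Defs.dist d y x.
Proof.
  rewrite !dist_enorm, (enorm_ext _ (fun c => -1 * (y c - x c))) by (intros; ring).
  rewrite enorm_scale, Rabs_left by lra. ring.
Qed.

End EuclideanNorm.

Definition shrink (d : nat) : R := INR d / INR (d + 1).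

Lemma shrink_nonneg d : 0 <= shrink d.
Proof.
  unfold shrink. rewrite plus_INR. pose proof (pos_INR d).
  apply Rmult_le_pos; [lra|apply Rlt_le, Rinv_0_lt_compat; simpl; lra].
Qed.

Lemma shrink_le_1 d : shrink d <= 1.
Proof.
  unfold shrink. rewrite plus_INR. pose proof (pos_INR d).
  apply Rmult_le_reg_r with (INR d + INR 1); simpl; [lra|].
  unfold Rdiv; rewrite Rmult_assoc, Rinv_l by lra. lra.
Qed.

Lemma dist_barycenter_le d (T : simplex) j D :
  (j <= d)%nat -> (forall m, (m <= d)%nat -> Defs.dist d (T m) (T j) <= D) ->
  Defs.dist d (barycenter d T) (T j) <= shrink d * D.
Proof.
  intros Hj HD.
  assert (Hpos : 0 < INR (S d)) by (apply lt_0_INR; lia).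
  rewrite dist_enorm,
    (enorm_ext d _ (fun c => / INR (S d) * sumR (fun m => T m c - T j c) (seq 0 (S d)))).
  2:{ intros c. rewrite sumR_sub_const, length_seq. unfold barycenter.
      fold (sumR (fun m => T m c) (seq 0 (S d))). field. lra. }
  rewrite enorm_scale, Rabs_right by (apply Rle_ge, Rlt_le, Rinv_0_lt_compat, Hpos).
  assert (Hcount : length (filter (fun m => negb (Nat.eqb m j)) (seq 0 (S d))) = d).
  { pose proof (length_filter_remove (fun _ => true) j (seq 0 (S d))
                  (seq_NoDup _ _) ltac:(apply in_seq; lia) eq_refl) as H.
    rewrite filter_true, length_seq in H. injection H as H. symmetry; exact H. }
  assert (Hsum : sumR (fun m => enorm d (fun c => T m c - T j c)) (seq 0 (S d)) <= INR d * D).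
  { eapply Rle_trans.
    - apply (sumR_le_two_valued (fun m => negb (Nat.eqb m j)) _ D 0).
      intros m Hm. apply in_seq in Hm. rewrite <- dist_enorm.
      destruct (Nat.eqb_spec m j) as [->|]; simpl; [rewrite dist_self; lra|apply HD; lia].
    - rewrite Hcount. lra. }
  pose proof (enorm_sum_le d (fun m c => T m c - T j c) (seq 0 (S d))).
  unfold shrink. rewrite Nat.add_1_r.
  apply Rle_trans with (/ INR (S d) * (INR d * D)).
  - apply Rmult_le_compat_l; [apply Rlt_le, Rinv_0_lt_compat, Hpos|lra].
  - right. field. lra.
Qed.

Definition bounded (d : nat) (D : R) (T : simplex) : Prop :=
  forall i j, (i <= d)%nat -> (j <= d)%nat -> Defs.dist d (T i) (T j) <= D.

Lemma bounded_nonneg d D T : bounded d D T -> 0 <= D.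
Proof. intros H. rewrite <- (dist_self d (T 0%nat)). apply H; lia. Qed.

Lemma regular_unit_bounded d T : regular_unit d T -> bounded d 1 T.
Proof.
  intros Hreg i j Hi Hj. destruct (Nat.eq_dec i j) as [->|Hij].
  - rewrite dist_self; lra.
  - rewrite (Hreg i j Hi Hj Hij); lra.
Qed.

Lemma fold_Rmax_le_iff l r :
  fold_right Rmax 0 l <= r <-> 0 <= r /\ forall x, In x l -> x <= r.
Proof.
  induction l as [|x l IH]; simpl.
  - split; [intros H; split; [exact H|intros _ []]|intros [H _]; exact H].
  - split.
    + intros H. pose proof (Rle_trans _ _ _ (Rmax_l x _) H) as Hx.
      apply (Rle_trans _ _ _ (Rmax_r x _)), IH in H. destruct H as [Hr Hl].
      split; [exact Hr|intros y [<-|Hy]; auto].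
    + intros [Hr Hl]. apply Rmax_lub; [auto|apply IH; auto].
Qed.

Lemma diameter_le_iff d T r : diameter d T <= r <-> bounded d r T.
Proof.
  unfold diameter. rewrite fold_Rmax_le_iff. split.
  - intros [_ Hall] i j Hi Hj. apply Hall, in_map_iff. exists (i, j).
    split; [reflexivity|]. apply in_prod; apply in_seq; lia.
  - intros Hb. split; [exact (bounded_nonneg _ _ _ Hb)|].
    intros x Hx. apply in_map_iff in Hx. destruct Hx as [[i j] [<- Hij]].
    apply in_prod_iff in Hij. destruct Hij as [Hi Hj]. apply in_seq in Hi, Hj.
    simpl; apply Hb; lia.
Qed.

Lemma diam_gt_false_iff d r T : diam_gt d r T = false <-> bounded d r T.
Proof.
  rewrite <- diameter_le_iff. unfold diam_gt.
  destruct (Rlt_dec r (diameter d T)); split; intros H; try discriminate; lra.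
Qed.

Definition child (d : nat) (T : simplex) (m : nat) : simplex :=
  replace_vertex T m (barycenter d T).

(* [fresh i] marks the vertices that are barycentres introduced during the
   current round of subdivisions. *)
Definition settled (d : nat) (D : R) (fresh : nat -> bool) (T : simplex) : Prop :=
  bounded d D T /\
  forall i j, (i <= d)%nat -> (j <= d)%nat -> fresh i = true -> i <> j ->
    Defs.dist d (T i) (T j) <= shrink d * D.

Lemma settled_child d D fresh T m :
  settled d D fresh T -> (m <= d)%nat ->
  settled d D (fun i => fresh i || Nat.eqb i m) (child d T m).
Proof.
  intros [Hb Hfresh] Hm.
  assert (Hbar : forall j, (j <= d)%nat -> Defs.dist d (barycenter d T) (T j) <= shrink d * D)
    by (intros j Hj; apply dist_barycenter_le; auto).
  assert (Hshrink : shrink d * D <= D).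
  { pose proof (bounded_nonneg _ _ _ Hb). pose proof (shrink_le_1 d). nra. }
  unfold child, replace_vertex. split.
  - intros i j Hi Hj.
    destruct (Nat.eqb_spec i m), (Nat.eqb_spec j m).
    + rewrite dist_self. apply (bounded_nonneg _ _ _ Hb).
    + specialize (Hbar j Hj); lra.
    + rewrite dist_comm. specialize (Hbar i Hi); lra.
    + now apply Hb.
  - intros i j Hi Hj Hi_fresh Hij.
    destruct (Nat.eqb_spec i m), (Nat.eqb_spec j m).
    + congruence.
    + now apply Hbar.
    + rewrite dist_comm. now apply Hbar.
    + apply Hfresh; auto. now rewrite Bool.orb_false_r in Hi_fresh.
Qed.

Lemma bounded_child d D T m : bounded d D T -> (m <= d)%nat -> bounded d D (child d T m).
Proof.
  intros Hb Hm. apply (settled_child d D (fun _ => false) T m); [|exact Hm].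
  split; [exact Hb|discriminate].
Qed.

(* With at most one vertex left that is not fresh, every edge has a fresh endpoint. *)
Lemma settled_bounded_shrink d D fresh T :
  settled d D fresh T ->
  (length (filter (fun i => negb (fresh i)) (seq 0 (S d))) <= 1)%nat ->
  bounded d (shrink d * D) T.
Proof.
  intros [Hb Hfresh] Hold i j Hi Hj.
  destruct (Nat.eq_dec i j) as [->|Hij].
  { rewrite dist_self. pose proof (bounded_nonneg _ _ _ Hb). pose proof (shrink_nonneg d). nra. }
  destruct (fresh i) eqn:Ei; [now apply Hfresh|].
  destruct (fresh j) eqn:Ej; [rewrite dist_comm; apply Hfresh; auto|].
  exfalso.
  assert (Htwo : (length [i; j] <= length (filter (fun i => negb (fresh i)) (seq 0 (S d))))%nat).
  { apply NoDup_incl_length.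
    - constructor; [simpl; intuition|]. constructor; [simpl; auto|constructor].
    - intros x [<-|[<-|[]]]; apply filter_In; split;
        try (apply in_seq; lia); rewrite ?Ei, ?Ej; reflexivity. }
  change (length [i; j]) with 2%nat in Htwo. lia.
Qed.

Lemma subdiv_add d a b T : subdiv d (a + b) T = flat_map (subdiv d b) (subdiv d a T).
Proof.
  induction b as [|b IH].
  - rewrite Nat.add_0_r. simpl. induction (subdiv d a T); simpl; congruence.
  - rewrite Nat.add_succ_r. simpl. now rewrite IH, flat_map_flat_map.
Qed.

Lemma subdiv_succ d n T : subdiv d (S n) T = flat_map (subdiv d n) (map (child d T) (seq 0 (S d))).
Proof. change (S n) with (1 + n)%nat. rewrite subdiv_add. simpl. now rewrite app_nil_r. Qed.

Lemma length_subdiv d n T : length (subdiv d n T) = (S d ^ n)%nat.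
Proof.
  induction n as [|n IH]; [reflexivity|]. simpl.
  rewrite flat_map_constant_length with (c := S d), IH; [lia|].
  intros U _. unfold children. now rewrite length_map, length_seq.
Qed.

Lemma bounded_subdiv d D n T U : bounded d D T -> In U (subdiv d n T) -> bounded d D U.
Proof.
  intros HT. revert U. induction n as [|n IH]; simpl.
  - now intros U [<-|[]].
  - intros U HU. apply in_flat_map in HU. destruct HU as [V [HV HU]].
    apply in_map_iff in HU. destruct HU as [m [<- Hm]]. apply in_seq in Hm.
    apply bounded_child; [now apply IH|lia].
Qed.

Definition big_count (d : nat) (r : R) (n : nat) (T : simplex) : nat :=
  length (filter (diam_gt d r) (subdiv d n T)).

Lemma big_count_add d r a b T :
  INR (big_count d r (a + b) T) = sumR (fun U => INR (big_count d r b U)) (subdiv d a T).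
Proof. unfold big_count. now rewrite subdiv_add, length_filter_flat_map. Qed.

Lemma big_count_succ d r n T :
  INR (big_count d r (S n) T) = sumR (fun m => INR (big_count d r n (child d T m))) (seq 0 (S d)).
Proof. unfold big_count. now rewrite subdiv_succ, length_filter_flat_map, sumR_map. Qed.

Lemma big_count_le d r n T : INR (big_count d r n T) <= INR (S d) ^ n.
Proof.
  rewrite <- pow_INR, <- (length_subdiv d n T). apply le_INR, filter_length_le.
Qed.

Lemma big_count_bounded d r n T : bounded d r T -> big_count d r n T = 0%nat.
Proof.
  intros Hb. unfold big_count.
  rewrite (filter_ext_in _ (fun _ => false)), filter_false; [reflexivity|].
  intros U HU. apply diam_gt_false_iff. exact (bounded_subdiv d r n T U Hb HU).
Qed.

(* While [S n] vertices are not yet fresh, at least [(S n)!] of the [(S d)^n]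
   descendants after [n] steps replace [n] distinct ones among them. *)
Lemma big_count_settled d D n fresh T :
  settled d D fresh T ->
  length (filter (fun i => negb (fresh i)) (seq 0 (S d))) = S n ->
  INR (big_count d (shrink d * D) n T) + INR (fact (S n)) <= INR (S d) ^ n.
Proof.
  revert fresh T. induction n as [|n IH]; intros fresh T Hset Hold.
  - rewrite big_count_bounded by (apply (settled_bounded_shrink d D fresh); auto; lia).
    simpl; lra.
  - rewrite big_count_succ.
    assert (Hbound : sumR (fun m => INR (big_count d (shrink d * D) n (child d T m))) (seq 0 (S d))
                     <= INR (S d) ^ n * INR (length (seq 0 (S d)))
                        + (- INR (fact (S n))) * INR (S (S n)));
      [|rewrite length_seq in Hbound; rewrite <- tech_pow_Rmult, fact_simpl, mult_INR; lra].
    rewrite <- Hold.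
    replace (- INR (fact (S n))) with ((INR (S d) ^ n - INR (fact (S n))) - INR (S d) ^ n) by ring.
    apply sumR_le_two_valued.
    intros m Hm. apply in_seq in Hm.
    destruct (fresh m) eqn:Hm_fresh; cbn [negb]; [apply big_count_le|].
    assert (Hold' : length (filter (fun i => negb (fresh i || Nat.eqb i m)) (seq 0 (S d))) = S n).
    { rewrite (length_filter_remove _ m) in Hold
        by (apply seq_NoDup || (apply in_seq; lia) || now rewrite Hm_fresh).
      apply Nat.succ_inj in Hold. rewrite <- Hold.
      apply f_equal, filter_ext. intros i. apply Bool.negb_orb. }
    pose proof (IH _ _ (settled_child d D fresh T m Hset ltac:(lia)) Hold'). lra.
Qed.

Lemma one_add_pow_le_exp x n : 0 <= x -> (1 + x) ^ n <= exp (INR n * x).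
Proof.
  intros Hx. induction n as [|n IH]; [simpl; rewrite Rmult_0_l, exp_0; lra|].
  rewrite S_INR, Rmult_plus_distr_r, Rmult_1_l, exp_plus, <- tech_pow_Rmult, Rmult_comm.
  apply Rmult_le_compat; [apply pow_le; lra|lra|exact IH|apply exp_ineq1_le].
Qed.

Lemma pow_succ_le_exp_mul_fact n : INR (S n) ^ n <= exp (INR n) * INR (fact n).
Proof.
  induction n as [|n IH]; [simpl; rewrite exp_0; lra|].
  set (a := INR (S n)).
  assert (Ha : 0 < a) by (apply lt_0_INR; lia).
  assert (He : (1 + / a) ^ S n <= exp 1).
  { replace 1 with (a * / a) at 2 by (field; lra).
    apply one_add_pow_le_exp, Rlt_le, Rinv_0_lt_compat, Ha. }
  replace (INR (S (S n))) with (a * (1 + / a)) by (rewrite (S_INR (S n)); fold a; field; lra).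
  rewrite Rpow_mult_distr, <- tech_pow_Rmult, fact_simpl, mult_INR. fold a.
  replace (exp a) with (exp (INR n) * exp 1) by (unfold a; now rewrite S_INR, exp_plus).
  assert (0 <= a ^ n) by (apply pow_le; lra).
  assert (0 <= (1 + / a) ^ S n) by (apply pow_le; pose proof (Rinv_0_lt_compat a Ha); lra).
  replace (exp (INR n) * exp 1 * (a * INR (fact n))) with (a * (exp (INR n) * INR (fact n)) * exp 1)
    by ring.
  apply Rmult_le_compat; [apply Rmult_le_pos; lra|assumption|
                          apply Rmult_le_compat_l; [lra|exact IH]|exact He].
Qed.

Lemma one_sub_exp_opp_nonneg d : 0 <= 1 - exp (- INR d).
Proof.
  rewrite exp_Ropp. pose proof (exp_ineq1_le (INR d)). pose proof (pos_INR d).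
  assert (/ exp (INR d) <= / 1) by (apply Rinv_le_contravar; lra).
  rewrite Rinv_1 in *. lra.
Qed.

Lemma one_round d D T :
  bounded d D T -> INR (big_count d (shrink d * D) d T) <= (1 - exp (- INR d)) * INR (S d) ^ d.
Proof.
  intros Hb.
  assert (Hcount := big_count_settled d D d (fun _ => false) T).
  rewrite (filter_ext _ (fun _ => true)), filter_true, length_seq in Hcount by reflexivity.
  assert (Hset : settled d D (fun _ => false) T) by (split; [exact Hb|discriminate]).
  specialize (Hcount Hset eq_refl).
  assert (Hfact : INR (fact d) <= INR (fact (S d))) by (apply le_INR; rewrite fact_simpl; lia).
  assert (Hexp : exp (- INR d) * INR (S d) ^ d <= INR (fact d)).
  { rewrite exp_Ropp. apply Rmult_le_reg_l with (exp (INR d)); [apply exp_pos|].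
    rewrite <- Rmult_assoc, Rinv_r by apply Rgt_not_eq, exp_pos.
    rewrite Rmult_1_l. apply pow_succ_le_exp_mul_fact. }
  lra.
Qed.

Section Rounds.
Variables (d m : nat) (c eps : R).
Hypothesis eps_nonneg : 0 <= eps.
Hypothesis round_bound :
  forall D T, bounded d D T -> INR (big_count d (c * D) m T) <= eps * INR (S d) ^ m.

Lemma big_count_rounds k D T :
  bounded d D T -> INR (big_count d (c * D) (k * m) T) <= eps ^ k * INR (S d) ^ (k * m).
Proof.
  intros Hb. induction k as [|k IH].
  - pose proof (big_count_le d (c * D) 0 T). simpl in *. lra.
  - rewrite Nat.mul_succ_l, big_count_add.
    eapply Rle_trans.
    { apply (sumR_le_two_valued (diam_gt d (c * D)) _ (eps * INR (S d) ^ m) 0).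
      intros U HU. destruct (diam_gt d (c * D) U) eqn:Hbig.
      - exact (round_bound D U (bounded_subdiv _ _ _ _ _ Hb HU)).
      - apply diam_gt_false_iff in Hbig. rewrite big_count_bounded by exact Hbig. simpl; lra. }
    fold (big_count d (c * D) (k * m) T).
    assert (0 <= eps * INR (S d) ^ m)
      by (apply Rmult_le_pos; [exact eps_nonneg|apply pow_le, pos_INR]).
    rewrite pow_add, <- tech_pow_Rmult. nra.
Qed.

Lemma big_count_shrink_pow z D T :
  bounded d D T -> INR (big_count d (c ^ z * D) (z * m) T) <= INR z * eps * INR (S d) ^ (z * m).
Proof.
  revert D T. induction z as [|z IH]; intros D T Hb.
  - rewrite big_count_bounded; [simpl; lra|]. simpl. now rewrite Rmult_1_l.
  - change (S z * m)%nat with (m + z * m)%nat. rewrite big_count_add.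
    set (N := INR (S d) ^ (z * m)).
    assert (HN : 0 <= N) by apply pow_le, pos_INR.
    assert (HzN : 0 <= INR z * eps * N)
      by (apply Rmult_le_pos; [apply Rmult_le_pos, eps_nonneg; apply pos_INR|exact HN]).
    eapply Rle_trans.
    { apply (sumR_le_two_valued (diam_gt d (c * D)) _ (N + INR z * eps * N) (INR z * eps * N)).
      intros U HU. destruct (diam_gt d (c * D) U) eqn:Hbig.
      - pose proof (big_count_le d (c ^ S z * D) (z * m) U). fold N in H. lra.
      - apply diam_gt_false_iff in Hbig.
        replace (c ^ S z * D) with (c ^ z * (c * D)) by (simpl; ring).
        exact (IH _ _ Hbig). }
    fold (big_count d (c * D) m T). rewrite length_subdiv, pow_INR, pow_add. fold N.
    assert (N * INR (big_count d (c * D) m T) <= N * (eps * INR (S d) ^ m))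
      by (apply Rmult_le_compat_l; [exact HN|exact (round_bound D T Hb)]).
    replace (N + INR z * eps * N - INR z * eps * N) with N by ring.
    rewrite (S_INR z). lra.
Qed.

End Rounds.

Theorem lemma4 (d k z : nat) (S0 : simplex) :
  (1 <= d)%nat -> (1 <= k)%nat -> (1 <= z)%nat ->
  regular_unit d S0 ->
  let s := (z * k * d)%nat in
  INR (length (filter (diam_gt d ((INR d / INR (d + 1)) ^ z)) (subdiv d s S0)))
    / INR ((d + 1) ^ s)
  <= INR z * (1 - exp (- INR d)) ^ k.
Proof.
  intros _ _ _ Hreg s.
  set (q := 1 - exp (- INR d)).
  assert (Hq : 0 <= q) by apply one_sub_exp_opp_nonneg.
  assert (Hblock : forall D T, bounded d D T ->
            INR (big_count d (shrink d * D) (k * d) T) <= q ^ k * INR (S d) ^ (k * d))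
    by (intros D T; apply big_count_rounds; [exact Hq|apply one_round]).
  pose proof (big_count_shrink_pow d (k * d) (shrink d) (q ^ k) (pow_le q k Hq) Hblock
                z 1 S0 (regular_unit_bounded d S0 Hreg)) as Hz.
  rewrite Rmult_1_r in Hz. unfold big_count, shrink in Hz.
  unfold s. rewrite <- Nat.mul_assoc, pow_INR. rewrite Nat.add_1_r in *.
  apply Rmult_le_reg_r with (INR (S d) ^ (z * (k * d))); [apply pow_lt, lt_0_INR; lia|].
  unfold Rdiv. rewrite Rmult_assoc, Rinv_l by (apply pow_nonzero, not_0_INR; lia).
  lra.
Qed.
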